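(* Let $L$ be a relational language, let $\mathcal F$ be a set of finite irreducible $L$-structures, and let $\mathbf H$ be a countable $\mathcal F$-free $L$-structure (with vertex set $\omega$) universal for all countable $\mathcal F$-free $L$-structures. Assume that there are $\mathcal F$-free $L$-structures $\mathbf B$ and $\mathbf U$, each consisting of one vertex, and infinitely many pairwise non-isomorphic $\mathcal F$-free two-vertex $L$-structures $\mathbf C_0,\mathbf C_1,\dots$ such that in each $\mathbf C_i$ the first vertex induces a copy of $\mathbf B$ and the second (last) vertex induces a copy of $\mathbf U$. Then there exist an $\mathcal F$-free $L$-structure $\mathbf A$ on three vertices and a colouring $c:\binom{\mathbf H}{\mathbf A}\to\omega$ such that for every tree-like embedding $f:\mathbf H\to\mathbf H$, $c$ attains every value in $\omega$ on the set of embeddings $\mathbf A\to\mathbf H$ whose image lies in $f[\omega]$.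
   Context: Convention: every structure is countable, has vertex set some $n\in\omega$ or $\omega$ ordered naturally, embeddings are monotone (order-preserving) embeddings of $L$-structures, isomorphisms likewise respect the order; $\binom{\mathbf H}{\mathbf A}$ is the set of such embeddings $\mathbf A\to\mathbf H$. $\mathbf A$ is $\mathcal F$-free if no member of $\mathcal F$ embeds into it; universal for a class if every member of the class embeds into it. The Gaifman graph of a structure $\mathbf A$ joins distinct $x,y$ iff some tuple in some relation of $\mathbf A$ contains both; $\mathbf A$ is irreducible if its Gaifman graph is complete. For $X\subseteq\omega$, $\mathrm{tp}_{\mathbf H}(X)$ is the isomorphism type (respecting the order) of the substructure of $\mathbf H$ induced on $X$. An embedding $f:\mathbf H\to\mathbf H$ is tree-like if for every finite $X=\{x_0<\dots<x_m\}\subseteq\omega$, every $0\le i\le m$ and every $x\in\omega$ with $x>x_m$ there is $y>x_m$ such that $\mathrm{tp}_{\mathbf H}(f[X]\cup\{f(y)\})=\mathrm{tp}_{\mathbf H}(X\cup\{x\})$ and $\mathrm{tp}_{\mathbf H}(\{0,\dots,f(x_0)-1,f(y)\})=\mathrm{tp}_{\mathbf H}(\{0,\dots,f(x_0)-1,f(x_i)\})$. *)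

From mathcomp Require Import all_boot.
Set Implicit Arguments. Unset Strict Implicit. Unset Printing Implicit Defensive.

Inductive vset := Fin of nat | Omega.

Definition in_vset (V : vset) (x : nat) : bool :=
  match V with Fin n => x < n | Omega => true end.

(* A (countable) L-structure with vertex set n or omega, ordered naturally.
   Relations only contain tuples of vertices. *)
Unset Implicit Arguments.
Record structure (Sym : Type) (ar : Sym -> nat) := Structure {
  sdom : vset;
  srel : forall s : Sym, (ar s).-tuple nat -> Prop;
  srel_dom : forall s t, srel s t -> forall x, x \in t -> in_vset sdom x
}.
Set Implicit Arguments.
Arguments structure {Sym} ar.
Arguments Structure {Sym ar}.
Arguments srel_dom {Sym ar}.
Arguments sdom {Sym ar}.
Arguments srel {Sym ar}.

Section Defs.
Variables (Sym : Type) (ar : Sym -> nat).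
Notation str := (structure ar).

Definition vert (A : str) (x : nat) : bool := in_vset (sdom A) x.

(* Monotone (order-preserving) embedding A -> B, given by f : nat -> nat
   (only its values on the vertex set of A matter). *)
Definition emb (A B : str) (f : nat -> nat) : Prop :=
  (forall x, vert A x -> vert B (f x)) /\
  (forall x y, vert A x -> vert A y -> x < y -> f x < f y) /\
  (forall s (t : (ar s).-tuple nat), all (vert A) t ->
     (srel A s t <-> srel B s (map_tuple f t))).

Definition embeds (A B : str) : Prop := exists f, emb A B f.

Definition iso (A B : str) : Prop :=
  exists f, emb A B f /\ forall y, vert B y -> exists x, vert A x /\ f x = y.

Definition F_free (F : str -> Prop) (A : str) : Prop :=
  forall G, F G -> ~ embeds G A.

Definition finite_str (A : str) : Prop := exists n, sdom A = Fin n.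

Definition irreducible (A : str) : Prop :=
  forall x y, vert A x -> vert A y -> x <> y ->
    exists s (t : (ar s).-tuple nat), srel A s t /\ x \in t /\ y \in t.

(* Elements of binom(H, A) for a finite A on n vertices: an embedding is
   determined by its values on 0..n-1, recorded as the sequence e. *)
Definition emb_copy (A H : str) (n : nat) (e : seq nat) : Prop :=
  sdom A = Fin n /\ size e = n /\ emb A H (nth 0 e).

(* tp_H(X) = tp_H(Y) for (finite) X, Y ⊆ vertices of H, given as predicates:
   the order-preserving bijection X -> Y is an isomorphism of the induced
   substructures. *)
Definition same_tp (H : str) (X Y : nat -> bool) : Prop :=
  exists g : nat -> nat,
    (forall x, X x -> Y (g x)) /\
    (forall y, Y y -> exists x, X x /\ g x = y) /\
    (forall x y, X x -> X y -> x < y -> g x < g y) /\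
    (forall s (t : (ar s).-tuple nat), all X t ->
       (srel H s t <-> srel H s (map_tuple g t))).

(* A finite nonempty X = {x0 < ... < xm} is a strictly increasing nonempty
   sequence xs; x0 = head, xm = last; x_i ranges over the elements of xs. *)
Definition tree_like (H : str) (f : nat -> nat) : Prop :=
  emb H H f /\
  forall (x0 : nat) (xs : seq nat) (xi x : nat),
    sorted ltn (x0 :: xs) -> xi \in x0 :: xs -> last x0 xs < x ->
    exists y, last x0 xs < y /\
      same_tp H (fun z => (z \in map f (x0 :: xs)) || (z == f y))
                (fun z => (z \in x0 :: xs) || (z == x)) /\
      same_tp H (fun z => (z < f x0) || (z == f y))
                (fun z => (z < f x0) || (z == f xi)).

End Defs.

From mathcomp Require Import all_boot.
From Stdlib Require Import ClassicalEpsilon.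
Set Implicit Arguments. Unset Strict Implicit. Unset Printing Implicit Defensive.

(* Take for A three U-vertices with no relations between them, and colour a copy
   (p, q, r) of A in H by the index k such that the pair (d, r) is a copy of C_k,
   where d is the least vertex of H over which r has a C-type that q has not.
   Given k, embed into H the star with a B-vertex v0 and U-vertices v1 < v2 < v3,
   where (v0, v1) and (v0, v2) are copies of C_(k+1) and (v0, v3) is a copy of
   C_k; the star is F-free because an irreducible structure embedded in it lies
   within one edge. For a tree-like f, extending f[{v0, v1, v2}] inside f gives
   f y of the type of v3 over f[{v0, v1, v2}] and of the type of f v2 over every
   vertex below f v0. So f v0 is the least vertex separating f v2 from f y, and
   (f v1, f v2, f y) has colour k. *)

Lemma sorted_homo_map_eq (g : nat -> nat) (xs ys : seq nat) :
  sorted ltn xs -> sorted ltn ys -> size ys <= size xs ->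
  {in xs, forall x, g x \in ys} -> {in xs &, {homo g : x y / x < y}} ->
  map g xs = ys.
Proof.
move=> xs_lt ys_lt ys_size gxs g_homo.
have gxs_lt : sorted ltn (map g xs) by apply: homo_sorted_in g_homo _ xs_lt; apply/allP.
have gxs_uniq := sorted_uniq ltn_trans ltnn gxs_lt.
have gxs_sub : {subset map g xs <= ys} by move=> _ /mapP[x xx ->]; exact: gxs.
have [|_ gxs_eq] := uniq_min_size gxs_uniq gxs_sub; first by rewrite size_map.
apply: (sorted_eq ltn_trans) => //; first by move=> x y /andP[/ltn_trans xy /xy]; rewrite ltnn.
exact: uniq_perm gxs_uniq (sorted_uniq ltn_trans ltnn ys_lt) gxs_eq.
Qed.

Lemma mem_orb_rcons (T : eqType) (s : seq T) a :
  (fun z => (z \in s) || (z == a)) =i rcons s a.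
Proof. by move=> z; rewrite [RHS]mem_rcons inE orbC. Qed.

Lemma sorted_rcons_iota n a : n <= a -> sorted ltn (rcons (iota 0 n) a).
Proof.
move=> na; rewrite (sorted_pairwise ltn_trans) -cats1 pairwise_cat /=.
rewrite -(sorted_pairwise ltn_trans) iota_ltn_sorted !andbT allrel1r.
by apply/allP => z; rewrite mem_iota => /andP[_ /leq_trans]; apply.
Qed.

Section Structures.
Variables (Sym : Type) (ar : Sym -> nat).
Notation str := (structure ar).

Lemma map_tuple_eq_in s (t : (ar s).-tuple nat) (P : pred nat) (h1 h2 : nat -> nat) :
  all P t -> {in P, h1 =1 h2} -> map_tuple h1 t = map_tuple h2 t.
Proof. by move=> /allP t_P h12; apply: val_inj; apply/eq_in_map => v /t_P /h12. Qed.

Lemma map_tuple_comp s (t : (ar s).-tuple nat) (g h : nat -> nat) :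
  map_tuple g (map_tuple h t) = map_tuple (g \o h) t.
Proof. by apply: val_inj; rewrite /= map_comp. Qed.

Lemma map_tuple_id s (t : (ar s).-tuple nat) : map_tuple id t = t.
Proof. by apply: val_inj; rewrite /= map_id. Qed.

Lemma all_map_tuple s (t : (ar s).-tuple nat) (P : pred nat) (h : nat -> nat) :
  all P (map_tuple h t) = all (P \o h) t.
Proof. by rewrite /= all_map. Qed.

Lemma emb_comp (A K G : str) phi rho : emb A K phi -> emb K G rho -> emb A G (rho \o phi).
Proof.
move=> [phi_vert [phi_mono phi_rel]] [rho_vert [rho_mono rho_rel]]; split; [|split].
- by move=> x Ax; apply/rho_vert/phi_vert.
- by move=> x y Ax Ay xy; apply: rho_mono; [exact: phi_vert|exact: phi_vert|exact: phi_mono].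
- move=> s t At; rewrite phi_rel // rho_rel ?map_tuple_comp //.
  by rewrite all_map_tuple; apply: sub_all At => x; exact: phi_vert.
Qed.

Lemma emb_eq_in (A K : str) h1 h2 : {in vert A, h1 =1 h2} -> emb A K h1 -> emb A K h2.
Proof.
move=> h12 [h1_vert [h1_mono h1_rel]]; split; [|split].
- by move=> x Ax; rewrite -h12 //; exact: h1_vert.
- by move=> x y Ax Ay xy; rewrite -!h12 //; exact: h1_mono.
- by move=> s t At; rewrite h1_rel // (map_tuple_eq_in At h12).
Qed.

Lemma F_free_emb (F : str -> Prop) (A K : str) rho : emb A K rho -> F_free F K -> F_free F A.
Proof.
by move=> AK K_free G FG [phi GA]; apply: (K_free G FG); exists (rho \o phi); exact: emb_comp AK.
Qed.

Definition partial_iso (K : str) (X : pred nat) (g : nat -> nat) :=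
  {in X &, {homo g : x y / x < y}} /\
  forall s (t : (ar s).-tuple nat), all X t -> (srel K s t <-> srel K s (map_tuple g t)).

Lemma partial_iso_eq (K : str) (X X' : pred nat) g :
  X =i X' -> partial_iso K X g -> partial_iso K X' g.
Proof.
move=> XX' [g_mono g_rel]; split=> [x y|s t]; first by rewrite -!XX'; exact: g_mono.
by rewrite -(eq_all XX'); exact: g_rel.
Qed.

Lemma same_tp_sorted (K : str) (X Y : pred nat) xs ys :
  same_tp K X Y -> sorted ltn xs -> sorted ltn ys -> size ys <= size xs ->
  X =i xs -> Y =i ys -> exists2 g, map g xs = ys & partial_iso K (fun z => z \in xs) g.
Proof.
move=> [g [gXY [_ [g_mono g_rel]]]] xs_lt ys_lt ys_size X_xs Y_ys.
have g_homo : {in xs &, {homo g : x y / x < y}} by move=> x y; rewrite -!X_xs; exact: g_mono.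
exists g; last by split=> // s t t_xs; apply: g_rel; rewrite (eq_all X_xs).
by apply: sorted_homo_map_eq => // x; rewrite -X_xs -Y_ys; exact: gXY.
Qed.

Lemma same_tp_initial_segment (K : str) n a b : n <= a -> n <= b ->
  same_tp K (fun z => (z < n) || (z == a)) (fun z => (z < n) || (z == b)) ->
  exists g, [/\ partial_iso K (fun z => (z < n) || (z == a)) g,
                {in gtn n, g =1 id} & g a = b].
Proof.
move=> na nb tp.
have mem_segment c z : (z < n) || (z == c) = (z \in rcons (iota 0 n) c).
  by rewrite mem_rcons inE mem_iota orbC.
have size_seg : size (rcons (iota 0 n) b) <= size (rcons (iota 0 n) a).
  by rewrite !size_rcons.
have [g g_seg g_iso] := same_tp_sorted tp (sorted_rcons_iota na) (sorted_rcons_iota nb)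
  size_seg (mem_segment a) (mem_segment b).
move: g_seg; rewrite map_rcons => /rcons_inj[g_iota ga].
have /eq_in_map g_id : map g (iota 0 n) = map id (iota 0 n) by rewrite map_id.
exists g; split=> // [|z zn]; first by apply: partial_iso_eq g_iso => z; rewrite -mem_segment.
by apply: g_id; rewrite mem_iota add0n.
Qed.

Section EmbeddingsIntoOmega.
Variable H : str.
Hypothesis Hdom : sdom H = Omega.

Lemma vert_omega x : vert H x.
Proof. by rewrite /vert Hdom. Qed.

Lemma emb_partial_iso (A : str) X g h : partial_iso H X g ->
  (forall v, vert A v -> X (h v)) -> emb A H h -> emb A H (g \o h).
Proof.
move=> [g_mono g_rel] AX [_ [h_mono h_rel]]; split; [|split].
- by move=> x _; exact: vert_omega.
- by move=> x y Ax Ay xy; apply: g_mono; [exact: AX|exact: AX|exact: h_mono].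
- move=> s t At; rewrite h_rel // g_rel ?map_tuple_comp //.
  by rewrite all_map_tuple; apply: sub_all At => x; exact: AX.
Qed.

Lemma emb_partial_iso_pull (A : str) X g h : partial_iso H X g ->
  (forall v, vert A v -> X (h v)) -> emb A H (g \o h) -> emb A H h.
Proof.
move=> [g_mono g_rel] AX [_ [gh_mono gh_rel]]; split; [|split].
- by move=> x _; exact: vert_omega.
- move=> x y Ax Ay xy; have /= gh_xy := gh_mono x y Ax Ay xy.
  case: (ltngtP (h x) (h y)) => // [hyx|hxy]; last by rewrite hxy ltnn in gh_xy.
  by have := g_mono _ _ (AX _ Ay) (AX _ Ax) hyx; rewrite ltnNge (ltnW gh_xy).
- move=> s t At; rewrite gh_rel // -(map_tuple_comp t g h) -g_rel //.
  by rewrite all_map_tuple; apply: sub_all At => x; exact: AX.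
Qed.

Lemma tree_like_mono f x y : tree_like H f -> x < y -> f x < f y.
Proof. by move=> [[_ [f_mono _]] _] xy; apply: f_mono; rewrite ?vert_omega. Qed.

End EmbeddingsIntoOmega.

Section Star.
Variables (F : str -> Prop) (B U : str) (C : nat -> str).
Hypotheses (HB : sdom B = Fin 1) (HU : sdom U = Fin 1).
Hypothesis HC : forall i, sdom (C i) = Fin 2 /\ F_free F (C i) /\
  emb B (C i) (fun _ => 0) /\ emb U (C i) (fun _ => 1).

Definition pair_map (d r v : nat) := if v == 0 then d else r.

Lemma vert_C i v : vert (C i) v = (v < 2).
Proof. by rewrite /vert (HC i).1. Qed.

Lemma C_rel_B i i' s (t : (ar s).-tuple nat) : all (pred1 0) t ->
  (srel (C i) s t <-> srel (C i') s t).
Proof.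
move=> t0; suff B_C j : srel B s t <-> srel (C j) s t by rewrite -(B_C i) (B_C i').
have [_ [_ [[_ [_ B_rel]] _]]] := HC j.
rewrite B_rel; last by apply: sub_all t0 => z /eqP ->; rewrite /vert HB.
by rewrite (map_tuple_eq_in (h2 := id) t0) ?map_tuple_id // => v /eqP ->.
Qed.

Lemma C_rel_U i s (t : (ar s).-tuple nat) : all (pred1 1) t ->
  (srel (C i) s t <-> srel U s (map_tuple (fun _ => 0) t)).
Proof.
move=> t1; have [_ [_ [_ [_ [_ U_rel]]]]] := HC i.
rewrite U_rel ?map_tuple_comp; last by rewrite all_map_tuple; apply/allP => z _; rewrite /vert HU.
by rewrite (map_tuple_eq_in (h2 := id) t1) ?map_tuple_id // => v /eqP ->.
Qed.

Definition star_label (k k' j : nat) := if j == 3 then k else k'.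
Definition on_edge (j z : nat) := (z == 0) || (z == j).

(* The edge {0, j} of the star is identified with the vertex set {0, 1} of C
   through [pair_map 0 1]; every relation of the star lies within one edge. *)
Definition star_rel k k' s (t : (ar s).-tuple nat) : Prop :=
  exists j, [/\ 0 < j, j < 4, all (on_edge j) t &
    srel (C (star_label k k' j)) s (map_tuple (pair_map 0 1) t)].
Arguments star_rel : clear implicits.

Lemma star_rel_dom k k' s t : star_rel k k' s t -> forall x, x \in t -> in_vset (Fin 4) x.
Proof. by move=> [j [_ j4 t_j _]] x /(allP t_j) /orP[/eqP->|/eqP->]. Qed.

Definition star k k' : str := Structure (Fin 4) (star_rel k k') (@star_rel_dom k k').

Lemma star_rel_edge k k' j s (t : (ar s).-tuple nat) : 0 < j -> j < 4 -> all (on_edge j) t ->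
  (srel (star k k') s t <-> srel (C (star_label k k' j)) s (map_tuple (pair_map 0 1) t)).
Proof.
move=> j0 j4 t_j; split; last by exists j; split.
move=> [j' [_ _ t_j' rel]].
have [t0|/allPn[z zt]] := boolP (all (pred1 0) t).
  have t0' : all (pred1 0) (map_tuple (pair_map 0 1) t).
    by rewrite all_map_tuple; apply: sub_all t0 => z /eqP ->.
  exact: (iffLR (C_rel_B _ _ t0') rel).
rewrite /= => /negbTE z0.
have := allP t_j z zt; have := allP t_j' z zt; rewrite /on_edge z0 /=.
by move=> /eqP zj' /eqP zj; rewrite -zj zj'.
Qed.

Lemma irreducible_on_edge k k' (G : str) phi : irreducible G -> emb G (star k k') phi ->
  exists j, [/\ 0 < j, j < 4 & forall u, vert G u -> on_edge j (phi u)].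
Proof.
move=> G_irr [phi_vert [_ phi_rel]].
have [[v [Gv v0]]|all0] := classic (exists v, vert G v /\ phi v != 0); last first.
  exists 1; split=> // u Gu; apply/orP; left.
  by apply/negPn/negP => u0; apply: all0; exists u.
exists (phi v); split; [by rewrite lt0n|exact: phi_vert|].
move=> u Gu; have [->|/eqP uv] := eqVneq u v; first by rewrite /on_edge eqxx orbT.
have [s [t [rel [ut vt]]]] := G_irr u v Gu Gv uv.
have Gt : all (vert G) t by apply/allP => z; exact: srel_dom rel z.
move: rel; rewrite phi_rel // => -[j [_ _ t_j _]].
have := allP t_j _ (map_f phi vt); have := allP t_j _ (map_f phi ut).
by rewrite /on_edge (negbTE v0) /= => ? /eqP ->.
Qed.

Lemma emb_star_edge k k' j (G : str) phi : 0 < j -> j < 4 ->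
  (forall u, vert G u -> on_edge j (phi u)) -> emb G (star k k') phi ->
  emb G (C (star_label k k' j)) (pair_map 0 1 \o phi).
Proof.
move=> j0 j4 G_edge [_ [phi_mono phi_rel]]; split; [|split].
- by move=> x _; rewrite vert_C /= /pair_map; case: ifP.
- move=> x y Gx Gy xy; have := phi_mono _ _ Gx Gy xy.
  move: (G_edge _ Gx) (G_edge _ Gy); rewrite /on_edge /pair_map /=.
  by case/orP=> /eqP-> /orP[]/eqP->; rewrite ?ltnn ?ltn0 // (gtn_eqF j0).
- move=> s t Gt; rewrite phi_rel // (star_rel_edge _ _ j0 j4) ?map_tuple_comp //.
  by rewrite all_map_tuple; apply: sub_all Gt => u; exact: G_edge.
Qed.

Hypothesis HF : forall G, F G -> finite_str G /\ irreducible G.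

Lemma star_free k k' : F_free F (star k k').
Proof.
move=> G FG [phi phi_emb]; have [_ G_irr] := HF FG.
have [j [j0 j4 G_edge]] := irreducible_on_edge G_irr phi_emb.
have [_ [C_free _]] := HC (star_label k k' j).
by apply: (C_free G FG); exists (pair_map 0 1 \o phi); exact: emb_star_edge.
Qed.

Definition U3_rel s (t : (ar s).-tuple nat) : Prop :=
  (exists2 v, v < 3 & all (pred1 v) t) /\ srel U s (map_tuple (fun _ => 0) t).
Arguments U3_rel : clear implicits.

Lemma U3_rel_dom s t : U3_rel s t -> forall x, x \in t -> in_vset (Fin 3) x.
Proof. by move=> [[v v3 t_v] _] x /(allP t_v) /eqP ->. Qed.

Definition U3 : str := Structure (Fin 3) U3_rel U3_rel_dom.

Lemma emb_U3_star k k' : emb U3 (star k k') succn.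
Proof.
split; [by []|split; [by []|move=> s t _]].
have C_U i : srel (C i) s (map_tuple (pair_map 0 1) (map_tuple succn t)) <->
             srel U s (map_tuple (fun _ => 0) t).
  by rewrite C_rel_U ?map_tuple_comp // !all_map_tuple; apply/allP.
split=> [[[v v3 t_v] U_t]|[j [j0 j4 t_j C_t]]].
- exists v.+1; split=> //; last exact: (iffRL (C_U _) U_t).
  by rewrite all_map_tuple; apply: sub_all t_v => z /eqP ->; rewrite /on_edge /= eqxx.
- split; last exact: (iffLR (C_U _) C_t).
  exists j.-1; first by rewrite -ltnS prednK.
  rewrite all_map_tuple in t_j; apply: sub_all t_j => z /=.
  by rewrite /on_edge /= => /eqP <-.
Qed.

Lemma emb_C_star k k' j : 0 < j -> j < 4 ->
  emb (C (star_label k k' j)) (star k k') (pair_map 0 j).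
Proof.
move=> j0 j4; split; [|split].
- by move=> x _; rewrite /vert /pair_map /=; case: ifP.
- by move=> [|[|x]] [|[|y]]; rewrite !vert_C.
- move=> s t t2; rewrite (star_rel_edge _ _ j0 j4) ?map_tuple_comp.
    rewrite (map_tuple_eq_in (h2 := id) t2) ?map_tuple_id // => v; rewrite unfold_in (HC _).1.
    by case: v => [|[|v]] //= _; rewrite /pair_map /= (gtn_eqF j0).
  by rewrite all_map_tuple; apply/allP => -[|v] _; rewrite /on_edge /= ?eqxx ?orbT.
Qed.

Variable H : str.
Hypothesis Hdom : sdom H = Omega.
Hypothesis C_noniso : forall i j, i <> j -> ~ iso (C i) (C j).

Definition pair_type k d r := emb (C k) H (pair_map d r).

Lemma pair_type_inj k1 k2 d r : pair_type k1 d r -> pair_type k2 d r -> k1 = k2.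
Proof.
move=> [_ [_ rel1]] [_ [_ rel2]]; have [//|/eqP k12] := eqVneq k1 k2.
case: (C_noniso k12); exists id; split.
  split; [by move=> x; rewrite !vert_C|split=> // s t t1].
  rewrite map_tuple_id rel1 // -rel2 //.
  by rewrite (eq_all (vert_C k2)) -(eq_all (vert_C k1)).
by move=> y C2y; exists y; split=> //; rewrite vert_C -(vert_C k2).
Qed.

Lemma pair_type_star k k' j h : 0 < j -> j < 4 -> emb (star k k') H h ->
  pair_type (star_label k k' j) (h 0) (h j).
Proof.
move=> j0 j4 h_emb; apply: emb_eq_in (emb_comp (emb_C_star k k' j0 j4) h_emb).
by move=> v _; rewrite /= /pair_map; case: ifP.
Qed.

Lemma pair_type_pull X g k d r : partial_iso H X g -> X d -> X r ->
  pair_type k (g d) (g r) -> pair_type k d r.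
Proof.
move=> g_iso Xd Xr gdr; apply: (emb_partial_iso_pull Hdom g_iso).
- by move=> v _; rewrite /pair_map; case: ifP.
- by apply: emb_eq_in gdr => v _; rewrite /= /pair_map; case: ifP.
Qed.

Lemma pair_type_push X g k d r : partial_iso H X g -> X d -> X r ->
  pair_type k d r -> pair_type k (g d) (g r).
Proof.
move=> g_iso Xd Xr dr; apply: emb_eq_in (emb_partial_iso Hdom g_iso _ dr).
- by move=> v _; rewrite /= /pair_map; case: ifP.
- by move=> v _; rewrite /pair_map; case: ifP.
Qed.

Definition first_split q r d k := pair_type k d r /\ ~ pair_type k d q /\
  forall d' k', d' < d -> pair_type k' d' r -> pair_type k' d' q.

Lemma first_split_uniq q r d1 k1 d2 k2 :
  first_split q r d1 k1 -> first_split q r d2 k2 -> k1 = k2.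
Proof.
move=> [r1 [q1 below1]] [r2 [q2 below2]].
case: (ltngtP d1 d2) => [d12|d21|d12]; first by case: q1; apply: below2.
  by case: q2; apply: below1.
by move: r1; rewrite d12 => /pair_type_inj; apply.
Qed.

(* When q and r never split, [epsilon] returns an arbitrary colour. *)
Definition split_colour (e : seq nat) : nat :=
  (epsilon (inhabits (0, 0)) (fun dk => first_split (nth 0 e 1) (nth 0 e 2) dk.1 dk.2)).2.

Lemma split_colour_spec e d k : first_split (nth 0 e 1) (nth 0 e 2) d k -> split_colour e = k.
Proof.
move=> dk_split; pose P dk := first_split (nth 0 e 1) (nth 0 e 2) dk.1 dk.2.
have := epsilon_spec (inhabits (0, 0)) P (ex_intro _ (d, k) dk_split).
by move=> eps_split; exact: first_split_uniq eps_split dk_split.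
Qed.

Lemma split_colour_attained k k' f h : k != k' -> tree_like H f -> emb (star k k') H h ->
  exists e, emb_copy U3 H 3 e /\ (forall z, z \in e -> exists w, f w = z) /\
            split_colour e = k.
Proof.
move=> kk' f_tree h_emb.
have h_lt i j : i < j < 4 -> h i < h j.
  case: h_emb => _ [h_mono _] /andP[ij j4].
  by apply: h_mono; rewrite /vert //= (ltn_trans ij j4).
have [h01 h12 h23] : [/\ h 0 < h 1, h 1 < h 2 & h 2 < h 3] by rewrite !h_lt.
have f_lt := tree_like_mono Hdom f_tree.
have h_sorted : sorted ltn [:: h 0; h 1; h 2] by rewrite /= h01 h12.
have h2_in : h 2 \in [:: h 0; h 1; h 2] by rewrite !inE eqxx !orbT.
have [y [h2y [tp1 tp2]]] := f_tree.2 _ _ _ _ h_sorted h2_in h23.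
have h0y : h 0 < y by rewrite (ltn_trans h01) // (ltn_trans h12).
have f_sorted : sorted ltn [:: f (h 0); f (h 1); f (h 2); f y] by rewrite /= !f_lt.
have H_sorted : sorted ltn [:: h 0; h 1; h 2; h 3] by rewrite /= h01 h12 h23.
have [g1 /= [g1_0 g1_1 g1_2 g1_y] g1_iso] := same_tp_sorted tp1 f_sorted H_sorted (leqnn _)
  (mem_orb_rcons _ _) (mem_orb_rcons _ _).
have [g2 [g2_iso g2_id g2_y]] :=
  same_tp_initial_segment (ltnW (f_lt _ _ h0y)) (ltnW (f_lt _ _ (ltn_trans h01 h12))) tp2.
exists [:: f (h 1); f (h 2); f y]; split; [|split].
- split=> //; split=> //; apply: (emb_partial_iso_pull Hdom g1_iso).
    by move=> [|[|[|v]]] //= _; rewrite !inE eqxx ?orbT.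
  apply: emb_eq_in (emb_comp (emb_U3_star k k') h_emb) => v; rewrite unfold_in.
  by case: v => [|[|[|v]]] //= _; rewrite ?g1_1 ?g1_2 ?g1_y.
- by move=> z; rewrite !inE => /or3P[] /eqP ->; eexists.
- apply: (split_colour_spec (d := f (h 0))); split; [|split] => /=.
  + apply: (pair_type_pull g1_iso); rewrite /= ?inE ?eqxx ?orbT //.
    by rewrite g1_0 g1_y; exact: (pair_type_star (j := 3) isT isT h_emb).
  + move=> k_h2; have k'_h2 : pair_type k' (f (h 0)) (f (h 2)).
      apply: (pair_type_pull g1_iso); rewrite /= ?inE ?eqxx ?orbT //.
      by rewrite g1_0 g1_2; exact: (pair_type_star (j := 2) isT isT h_emb).
    by move: kk'; rewrite (pair_type_inj k_h2 k'_h2) eqxx.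
  + move=> d' k'' d'_lt d'_y; rewrite -g2_y -[d'](g2_id d') //.
    by apply: (pair_type_push g2_iso) d'_y; rewrite /= ?d'_lt ?eqxx ?orbT.
Qed.

End Star.
End Structures.

Theorem theorem6p2 (Sym : Type) (ar : Sym -> nat)
  (F : structure ar -> Prop)
  (HF : forall G, F G -> finite_str G /\ irreducible G)
  (H : structure ar)
  (Hdom : sdom H = Omega)
  (Hfree : F_free F H)
  (Huniv : forall A : structure ar, F_free F A -> embeds A H)
  (B U : structure ar)
  (HB : sdom B = Fin 1 /\ F_free F B)
  (HU : sdom U = Fin 1 /\ F_free F U)
  (C : nat -> structure ar)
  (HC : forall i, sdom (C i) = Fin 2 /\ F_free F (C i) /\
          emb B (C i) (fun _ => 0) /\ emb U (C i) (fun _ => 1))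
  (HCiso : forall i j, i <> j -> ~ iso (C i) (C j)) :
  exists A : structure ar,
    sdom A = Fin 3 /\ F_free F A /\
    exists c : seq nat -> nat,
      forall f, tree_like H f ->
        forall k : nat, exists e : seq nat,
          emb_copy A H 3 e /\
          (forall z, z \in e -> exists w, f w = z) /\
          c e = k.
Proof.
exists (U3 U); split=> //; split.
  exact (F_free_emb (emb_U3_star HU.1 HC 0 0) (star_free HB.1 HC HF (k := 0) (k' := 0))).
exists (split_colour C H) => f f_tree k.
have [h h_emb] := Huniv _ (star_free HB.1 HC HF (k := k) (k' := k.+1)).
exact (split_colour_attained HB.1 HU.1 HC Hdom HCiso (negbT (ltn_eqF (ltnSn k))) f_tree h_emb).
Qed.
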